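(* Let $X(\mathcal{M})$ be the $SL_2(\mathbb{C})$ character variety of $\mathcal{M}$. There is exactly one irreducible component $X_0(\mathcal{M})$ of $X(\mathcal{M})$ containing the character of an irreducible representation. On $X_0(\mathcal{M})$ the functions $s=\operatorname{tr}\rho(\lambda)$ and $t=\operatorname{tr}\rho(\beta)$ are complete coordinates, identifying $X_0(\mathcal{M})$ with the curve in $\mathbb{C}^2$ cut out by $$(-2-3s+s^3)t^4+(4+4s-s^2-s^3)t^2-1=0,\quad\text{equivalently}\quad (s-2)(s+1)^2t^4-(s-2)(s+2)(s+1)t^2-1=0,$$ and this polynomial is irreducible in $\mathbb{C}[s,t]$. Moreover, on $X_0(\mathcal{M})$, $w:=\operatorname{tr}\rho(\lambda\beta)=\operatorname{tr}\rho((\lambda\beta)^{-1})$ satisfies $w=t-\frac{1}{t(s+1)}$.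
   Context: $\mathcal{M}$ is the SnapPy census manifold $m137$ with $\pi_1(\mathcal{M})=\langle \lambda,\beta \mid \beta^{-1}\lambda^{-1}\beta^{-1}\lambda^{-1}\beta^{2}\lambda=\lambda\beta^{-2}\lambda^{-1}\beta^{2}\rangle$, where $\lambda$ is the homological longitude. The $SL_2(\mathbb{C})$ character variety $X(\mathcal{M})$ is the GIT quotient $\operatorname{Hom}(\pi_1(\mathcal{M}),SL_2(\mathbb{C}))/\!/SL_2(\mathbb{C})$, an affine variety whose points are characters $[\rho]$ of representations $\rho$. A representation $\rho$ into $SL_2(\mathbb{C})$ is irreducible if no line in $\mathbb{C}^2$ is invariant under its image (equivalently, it is not conjugate into upper triangular matrices). *)

From HB Require Import structures.
From mathcomp Require Import all_boot all_order all_algebra.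
Set Implicit Arguments. Unset Strict Implicit. Unset Printing Implicit Defensive.
Import Order.TTheory GRing.Theory Num.Theory.
Local Open Scope ring_scope.

Section M137.
Variable R : numClosedFieldType.

(* A representation rho : pi_1(m137) -> SL_2(R) is determined by the images
   A = rho(lambda), B = rho(beta), with det = 1 and satisfying the relator
   beta^-1 lambda^-1 beta^-1 lambda^-1 beta^2 lambda = lambda beta^-2 lambda^-1 beta^2. *)
Definition is_rep (A B : 'M[R]_2) : Prop :=
  \det A = 1 /\ \det B = 1 /\
  B^-1 * A^-1 * B^-1 * A^-1 * (B ^+ 2) * A = A * (B ^+ 2)^-1 * A^-1 * (B ^+ 2).

(* irreducible: no line of R^2 invariant under both generators (hence under the image) *)
Definition irreducible_rep (A B : 'M[R]_2) : Prop :=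
  ~ exists v : 'cV[R]_2, v != 0 /\
      (exists a : R, A *m v = a *: v) /\ (exists b : R, B *m v = b *: v).

Definition character (A B : 'M[R]_2) : R * R * R := (\tr A, \tr B, \tr (A * B)).

(* the character variety X(M), as a subset of R^3 in trace coordinates *)
Definition charvar (x : R * R * R) : Prop :=
  exists A B, is_rep A B /\ character A B = x.

Definition ev3 (p : {poly {poly {poly R}}}) (x : R * R * R) : R :=
  ((p.[(x.1.1)%:P%:P]).[(x.1.2)%:P]).[x.2].

Definition zclosed (Y : R * R * R -> Prop) : Prop :=
  exists F : {poly {poly {poly R}}} -> Prop,
    forall x, Y x <-> (forall p, F p -> ev3 p x = 0).

Definition irr_closed (Y : R * R * R -> Prop) : Prop :=
  zclosed Y /\ (exists x, Y x) /\
  forall Z1 Z2, zclosed Z1 -> zclosed Z2 ->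
    (forall x, Y x -> Z1 x \/ Z2 x) ->
    (forall x, Y x -> Z1 x) \/ (forall x, Y x -> Z2 x).

Definition component (Y : R * R * R -> Prop) : Prop :=
  irr_closed Y /\ (forall x, Y x -> charvar x) /\
  forall Z, irr_closed Z -> (forall x, Z x -> charvar x) ->
    (forall x, Y x -> Z x) -> forall x, Z x -> Y x.

(* bivariate polynomials: outer variable t = 'X, inner variable s = 'X%:P *)
Definition evst (p : {poly {poly R}}) (s t : R) : R := (p.[t%:P]).[s].

Definition varS : {poly {poly R}} := ('X)%:P.
Definition varT : {poly {poly R}} := 'X.

Definition Pcurve : {poly {poly R}} :=
  (-2 - 3 * varS + varS ^+ 3) * varT ^+ 4
  + (4 + 4 * varS - varS ^+ 2 - varS ^+ 3) * varT ^+ 2 - 1.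

Definition Pcurve' : {poly {poly R}} :=
  (varS - 2) * (varS + 1) ^+ 2 * varT ^+ 4
  - (varS - 2) * (varS + 2) * (varS + 1) * varT ^+ 2 - 1.

Definition biconst (f : {poly {poly R}}) : Prop := exists c : R, f = c%:P%:P.

Definition irreducible2 (f : {poly {poly R}}) : Prop :=
  ~ biconst f /\ forall g h, f = g * h -> biconst g \/ biconst h.

End M137.

From HB Require Import structures.
From mathcomp Require Import all_boot all_order all_algebra.
From mathcomp Require Import ring zify.
From Stdlib Require Import Classical.
Set Implicit Arguments. Unset Strict Implicit. Unset Printing Implicit Defensive.
Import Order.TTheory GRing.Theory Num.Theory.
Local Open Scope ring_scope.

(* Write s, t, w for the traces of A = rho(lambda), B = rho(beta) and AB, and
   P(s, t) = c4(s) t^4 + c2(s) t^2 - 1.  For A, B in SL_2 every word in A, B lies in the span of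
   1, A, B, AB with coefficients polynomial in (s, t, w), and the trace form is nondegenerate on
   these four matrices unless kappa(s, t, w) = tr [A, B] equals 2, which happens exactly on
   reducible pairs.  Off that locus the relator holds iff its four coordinates vanish, and two of
   them already force P(s, t) = 0 and w = t - 1/(t(s + 1)).  So X(M) is the union of the curve X0
   and the reducible locus.  X0 is irreducible: y = 1/t satisfies the monic equation
   y^4 = c2(s) y^2 + c4(s), so every polynomial function on X0 lifts, up to a power of c4(s), to
   the biquadratic tower C[s][z]/(z^2 - c2 z - c4)[y]/(y^2 - z), whose norm down to C[s] vanishes
   only at 0 because c4 and the discriminant c2^2 + 4 c4 have a simple root at s = 2.
   Irreducibility of P in C[s, t] is a comparison of coefficients in s. *)

Section Mx2.
Variable R : comRingType.

Definition mx2 (a b c d : R) : 'M[R]_2 :=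
  \matrix_(i, j) if i == 0 then if j == 0 then a else b else if j == 0 then c else d.

Lemma mx2P (A : 'M[R]_2) : exists a b c d, A = mx2 a b c d.
Proof.
exists (A 0 0), (A 0 1), (A 1 0), (A 1 1); apply/matrixP => i j; rewrite !mxE.
by case: i => [[|[|i]] ?]; case: j => [[|[|j]] ?] //=; congr (A _ _); apply: val_inj.
Qed.

Lemma mulmx2 a b c d a' b' c' d' :
  mx2 a b c d * mx2 a' b' c' d' =
  mx2 (a * a' + b * c') (a * b' + b * d') (c * a' + d * c') (c * b' + d * d').
Proof.
rewrite -mulmxE; apply/matrixP => i j; rewrite !mxE !big_ord_recl big_ord0 !mxE /=.
by case: i => [[|[|i]] ?]; case: j => [[|[|j]] ?] //=; rewrite addr0.
Qed.

Lemma addmx2 a b c d a' b' c' d' :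
  mx2 a b c d + mx2 a' b' c' d' = mx2 (a + a') (b + b') (c + c') (d + d').
Proof. by apply/matrixP => i j; rewrite !mxE; case: (i == 0); case: (j == 0). Qed.

Lemma oppmx2 a b c d : - mx2 a b c d = mx2 (- a) (- b) (- c) (- d).
Proof. by apply/matrixP => i j; rewrite !mxE; case: (i == 0); case: (j == 0). Qed.

Lemma scalemx2 k a b c d : k *: mx2 a b c d = mx2 (k * a) (k * b) (k * c) (k * d).
Proof. by apply/matrixP => i j; rewrite !mxE; case: (i == 0); case: (j == 0). Qed.

Lemma scalar_mx2 k : k%:M = mx2 k 0 0 k.
Proof.
apply/matrixP => i j; rewrite !mxE.
by case: i => [[|[|i]] ?]; case: j => [[|[|j]] ?] //=; rewrite ?mulr1n ?mulr0n.
Qed.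

Lemma mx2_0 : 0 = mx2 0 0 0 0.
Proof. by apply/matrixP => i j; rewrite !mxE; case: (i == 0); case: (j == 0). Qed.

Lemma mxtrace_mx2 a b c d : \tr (mx2 a b c d) = a + d.
Proof. by rewrite /mxtrace !big_ord_recl big_ord0 !mxE /= addr0. Qed.

Lemma det_mx2 a b c d : \det (mx2 a b c d) = a * d - b * c.
Proof.
rewrite (expand_det_row _ 0) !big_ord_recl big_ord0 /cofactor !det_mx11 !mxE /=.
by rewrite addr0 expr0 expr1 mul1r mulN1r mulrN.
Qed.

Lemma adj_mx2 a b c d : \adj (mx2 a b c d) = mx2 d (- b) (- c) a.
Proof.
apply/matrixP => i j; rewrite !mxE /cofactor det_mx11 !mxE.
by case: i => [[|[|i]] ?]; case: j => [[|[|j]] ?] //=; ring.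
Qed.

Definition cv2 (x y : R) : 'cV[R]_2 := \col_i if i == 0 then x else y.

Lemma cv2P (v : 'cV[R]_2) : exists x y, v = cv2 x y.
Proof.
exists (v 0 0), (v 1 0); apply/matrixP => i j; rewrite !mxE.
by case: i => [[|[|i]] ?]; case: j => [[|j] ?] //=; congr (v _ _); apply: val_inj.
Qed.

Lemma mulmx2_cv2 a b c d x y : mx2 a b c d *m cv2 x y = cv2 (a * x + b * y) (c * x + d * y).
Proof.
apply/matrixP => i j; rewrite !mxE !big_ord_recl big_ord0 !mxE /=.
by case: i => [[|[|i]] ?] //=; rewrite addr0.
Qed.

Lemma scale_cv2 k x y : k *: cv2 x y = cv2 (k * x) (k * y).
Proof. by apply/matrixP => i j; rewrite !mxE; case: (i == 0). Qed.

Lemma cv2_eq0 x y : (cv2 x y == 0) = (x == 0) && (y == 0).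
Proof.
apply/eqP/andP => [v0 | [/eqP-> /eqP->]].
  by have := congr1 (fun v : 'cV_2 => (v 0 0, v 1 0)) v0; rewrite !mxE => -[-> ->].
by apply/matrixP => i j; rewrite !mxE; case: (i == 0).
Qed.

End Mx2.

Lemma inv_sl2 (R : comUnitRingType) (A : 'M[R]_2) : \det A = 1 -> A^-1 = \adj A.
Proof.
by move=> detA; rewrite [A^-1]/(invmx A) /invmx unitmxE detA unitr1 invr1 scale1r.
Qed.

Lemma mxtrace_inv_sl2 (R : comUnitRingType) (A : 'M[R]_2) : \det A = 1 -> \tr A^-1 = \tr A.
Proof.
move=> detA; rewrite inv_sl2 //; have [a [b [c [d ->]]]] := mx2P A.
by rewrite adj_mx2 !mxtrace_mx2 addrC.
Qed.

Section TraceIdentities.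
Variable R : comRingType.
Implicit Types (A B : 'M[R]_2) (s t w p q : R).

(* [p] and [q] stand for [\det A] and [\det B]; [kappa s t w 1 1] is tr (A B A^-1 B^-1). *)
Definition kappa s t w p q : R := s ^+ 2 * q + t ^+ 2 * p + w ^+ 2 - s * t * w - 2 * p * q.

(* Coordinates of the relator in the basis (1, A, B, AB), by Cayley-Hamilton reduction. *)
Definition relI s t w p q : R :=
  - s * t ^+ 2 * w ^+ 2 + s * t ^+ 2 * p * q + t ^+ 3 * w * p + t ^+ 2 * p * q + t * w ^+ 3
  - 3 * t * w * p * q - p * q ^+ 2.
Definition relA s t w p q : R :=
  - s * t ^+ 2 * q + s * t * w * q - t ^+ 2 * p * q + t * w * q + p * q ^+ 2.
Definition relB s t w p q : R :=
  s * t * w ^+ 2 - s * t * p * q - t ^+ 3 * p - t ^+ 2 * w * p + 2 * t * p * q + w * p * q.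
Definition relAB s t w p q : R :=
  s * t ^+ 3 - s * t * q - t ^+ 2 * w - t * w ^+ 2 + t * p * q.

Lemma relator_adj_decomposition A B :
  let: (s, t, w, p, q) := (\tr A, \tr B, \tr (A * B), \det A, \det B) in
  \adj B * \adj A * \adj B * \adj A * (B * B) * A - A * (\adj B * \adj B) * \adj A * (B * B) =
  (relI s t w p q)%:M + relA s t w p q *: A + relB s t w p q *: B + relAB s t w p q *: (A * B).
Proof.
have [a1 [a2 [a3 [a4 ->]]]] := mx2P A; have [b1 [b2 [b3 [b4 ->]]]] := mx2P B.
rewrite !adj_mx2 !mulmx2 !mxtrace_mx2 !det_mx2 scalar_mx2 !scalemx2 !oppmx2 !addmx2.
by congr mx2; rewrite /relI /relA /relB /relAB; ring.
Qed.

Lemma det_commutator A B :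
  \det (A * B - B * A) =
  2 * \det A * \det B - kappa (\tr A) (\tr B) (\tr (A * B)) (\det A) (\det B).
Proof.
have [a1 [a2 [a3 [a4 ->]]]] := mx2P A; have [b1 [b2 [b3 [b4 ->]]]] := mx2P B.
by rewrite !mulmx2 oppmx2 addmx2 !mxtrace_mx2 !det_mx2 /kappa; ring.
Qed.

Lemma trace_gram A B (c0 c1 c2 c3 : R) :
  let: (s, t, w, p, q) := (\tr A, \tr B, \tr (A * B), \det A, \det B) in
  let M := c0%:M + c1 *: A + c2 *: B + c3 *: (A * B) in
  [/\ \tr M = 2 * c0 + s * c1 + t * c2 + w * c3,
      \tr (M * A) = s * c0 + (s ^+ 2 - 2 * p) * c1 + w * c2 + (s * w - t * p) * c3,
      \tr (M * B) = t * c0 + w * c1 + (t ^+ 2 - 2 * q) * c2 + (t * w - s * q) * c3 &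
      \tr (M * (A * B)) =
        w * c0 + (s * w - t * p) * c1 + (t * w - s * q) * c2 + (w ^+ 2 - 2 * p * q) * c3].
Proof.
have [a1 [a2 [a3 [a4 ->]]]] := mx2P A; have [b1 [b2 [b3 [b4 ->]]]] := mx2P B.
rewrite /= scalar_mx2 !(mulmx2, scalemx2, addmx2) !mxtrace_mx2 !det_mx2.
by split; ring.
Qed.

End TraceIdentities.

Lemma gram_cramer (R : idomainType) (s t w c0 c1 c2 c3 : R) : kappa s t w 1 1 != 2 ->
  2 * c0 + s * c1 + t * c2 + w * c3 = 0 ->
  s * c0 + (s ^+ 2 - 2) * c1 + w * c2 + (s * w - t) * c3 = 0 ->
  t * c0 + w * c1 + (t ^+ 2 - 2) * c2 + (t * w - s) * c3 = 0 ->
  w * c0 + (s * w - t) * c1 + (t * w - s) * c2 + (w ^+ 2 - 2) * c3 = 0 ->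
  [/\ c0 = 0, c1 = 0, c2 = 0 & c3 = 0].
Proof.
move=> k2 L0_0 L1_0 L2_0 L3_0.
set L0 := (X in X = 0) in L0_0; set L1 := (X in X = 0) in L1_0.
set L2 := (X in X = 0) in L2_0; set L3 := (X in X = 0) in L3_0.
(* The multipliers form the adjugate of the Gram matrix of the trace form on (1, A, B, AB),
   whose determinant is -(kappa - 2)^2. *)
have e0 : (kappa s t w 1 1 - 2) ^+ 2 * c0 = - ((- s^+4 + 2*s^+3*t*w - s^+2*t^+2*w^+2 - 2*s^+2*t^+2
    - 2*s^+2*w^+2 + 6*s^+2 + 2*s*t^+3*w + 2*s*t*w^+3 - 6*s*t*w - t^+4 - 2*t^+2*w^+2 + 6*t^+2
    - w^+4 + 6*w^+2 - 8) * L0 + (s^+3 - s^+2*t*w + s*t^+2 + s*w^+2 - 4*s) * L1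
    + (s^+2*t - s*t^+2*w + t^+3 + t*w^+2 - 4*t) * L2 + (- s^+3*t + s^+2*t^+2*w + s^+2*w - s*t^+3
    - 2*s*t*w^+2 + 4*s*t + t^+2*w + w^+3 - 4*w) * L3).
  by rewrite /L0 /L1 /L2 /L3 /kappa; ring.
have e1 : (kappa s t w 1 1 - 2) ^+ 2 * c1 = - ((s^+3 - s^+2*t*w + s*t^+2 + s*w^+2 - 4*s) * L0
    + (- 2*s^+2 + 2*s*t*w - 2*t^+2 - 2*w^+2 + 8) * L1
    + (- s^+2*w + s*t*w^+2 - t^+2*w - w^+3 + 4*w) * L2
    + (s^+2*t - s*t^+2*w + t^+3 + t*w^+2 - 4*t) * L3).
  by rewrite /L0 /L1 /L2 /L3 /kappa; ring.
have e2 : (kappa s t w 1 1 - 2) ^+ 2 * c2 = - ((s^+2*t - s*t^+2*w + t^+3 + t*w^+2 - 4*t) * L0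
    + (- s^+2*w + s*t*w^+2 - t^+2*w - w^+3 + 4*w) * L1
    + (- 2*s^+2 + 2*s*t*w - 2*t^+2 - 2*w^+2 + 8) * L2
    + (s^+3 - s^+2*t*w + s*t^+2 + s*w^+2 - 4*s) * L3).
  by rewrite /L0 /L1 /L2 /L3 /kappa; ring.
have e3 : (kappa s t w 1 1 - 2) ^+ 2 * c3 = - ((- s^+3*t + s^+2*t^+2*w + s^+2*w - s*t^+3
    - 2*s*t*w^+2 + 4*s*t + t^+2*w + w^+3 - 4*w) * L0
    + (s^+2*t - s*t^+2*w + t^+3 + t*w^+2 - 4*t) * L1
    + (s^+3 - s^+2*t*w + s*t^+2 + s*w^+2 - 4*s) * L2
    + (- 2*s^+2 + 2*s*t*w - 2*t^+2 - 2*w^+2 + 8) * L3).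
  by rewrite /L0 /L1 /L2 /L3 /kappa; ring.
have k2sq : (kappa s t w 1 1 - 2) ^+ 2 != 0 by rewrite expf_neq0 // subr_eq0.
move: e0 e1 e2 e3; rewrite L0_0 L1_0 L2_0 L3_0 !mulr0 !addr0 oppr0 => e0 e1 e2 e3.
by split; apply: (mulfI k2sq); rewrite mulr0.
Qed.

Lemma relator_decomposition (R : comUnitRingType) (A B : 'M[R]_2) :
  \det A = 1 -> \det B = 1 ->
  let: (s, t, w) := (\tr A, \tr B, \tr (A * B)) in
  B^-1 * A^-1 * B^-1 * A^-1 * B ^+ 2 * A - A * (B ^+ 2)^-1 * A^-1 * B ^+ 2 =
  (relI s t w 1 1)%:M + relA s t w 1 1 *: A + relB s t w 1 1 *: B + relAB s t w 1 1 *: (A * B).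
Proof.
move=> detA detB; have unitB : B \is a GRing.unit.
  by rewrite -[_ \is a _]/(B \in unitmx) unitmxE detB unitr1.
rewrite expr2 invrM // !inv_sl2 //.
by have := relator_adj_decomposition A B; rewrite detA detB.
Qed.

Lemma sl2_basis_free (R : idomainType) (A B : 'M[R]_2) (c0 c1 c2 c3 : R) :
  \det A = 1 -> \det B = 1 -> kappa (\tr A) (\tr B) (\tr (A * B)) 1 1 != 2 ->
  c0%:M + c1 *: A + c2 *: B + c3 *: (A * B) = 0 -> [/\ c0 = 0, c1 = 0, c2 = 0 & c3 = 0].
Proof.
move=> detA detB k2 M0; have [] := trace_gram A B c0 c1 c2 c3.
rewrite /= M0 !mul0r !mxtrace0 detA detB !mulr1 => g0 g1 g2 g3.
exact: gram_cramer k2 (esym g0) (esym g1) (esym g2) (esym g3).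
Qed.

Section CommonEigenvectors.
Variable F : fieldType.
Implicit Types (A B M X Y : 'M[F]_2).

Definition has_common_eigenvector A B : Prop :=
  exists v : 'cV[F]_2, v != 0 /\ (exists a, A *m v = a *: v) /\ (exists b, B *m v = b *: v).

Lemma det_eq0_of_kernel n (M : 'M[F]_n) (v : 'cV[F]_n) : v != 0 -> M *m v = 0 -> \det M = 0.
Proof.
move=> v0 Mv; apply/eqP; rewrite -det_tr; apply/det0P; exists v^T; first by rewrite trmx_eq0.
by rewrite -trmx_mul Mv trmx0.
Qed.

Lemma linear_eq2_solutions (p q x y : F) : (p != 0) || (q != 0) -> p * x + q * y = 0 ->
  exists k, x = k * q /\ y = k * - p.
Proof.
have [-> | q0] /= := eqVneq q 0.
  rewrite orbF mul0r addr0 => p0 /eqP; rewrite mulf_eq0 (negbTE p0) /= => /eqP ->.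
  by exists (- y / p); split; [rewrite mulr0 | field].
move=> _ pq0; exists (x / q); split; first by field.
have -> : y = (p * x + q * y - p * x) / q by field.
by rewrite pq0; field.
Qed.

Lemma kernel_mx2 (a b c d : F) : (a != 0) || (b != 0) -> a * d - b * c = 0 ->
  forall u, mx2 a b c d *m u = 0 <-> exists k, u = k *: cv2 b (- a).
Proof.
move=> ab detM u; split => [Mu | [k ->]].
  have [x [y uxy]] := cv2P u; move: Mu; rewrite uxy mulmx2_cv2 => /eqP.
  rewrite cv2_eq0 => /andP [/eqP row1 _]; have [k [-> ->]] := linear_eq2_solutions ab row1.
  by exists k; rewrite scale_cv2.
rewrite scale_cv2 mulmx2_cv2; apply/eqP; rewrite cv2_eq0; apply/andP; split; apply/eqP.
  by ring.
by transitivity (- k * (a * d - b * c)); [ring | rewrite detM mulr0].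
Qed.

Lemma kernel_line M : M != 0 -> \det M = 0 ->
  exists2 v : 'cV[F]_2, v != 0 & forall u, M *m u = 0 <-> exists k, u = k *: v.
Proof.
have [a [b [c [d ->]]]] := mx2P M; rewrite det_mx2 => M0 detM.
have [ab | ab] := boolP ((a != 0) || (b != 0)).
  exists (cv2 b (- a)); last exact: kernel_mx2.
  by rewrite cv2_eq0 oppr_eq0 negb_and orbC.
have cd : (c != 0) || (d != 0).
  apply: contraNT M0; rewrite negb_or !negbK => /andP [/eqP c0 /eqP d0].
  by move: ab; rewrite negb_or !negbK => /andP [/eqP a0 /eqP b0]; rewrite a0 b0 c0 d0 -mx2_0.
exists (cv2 d (- c)); first by rewrite cv2_eq0 oppr_eq0 negb_and orbC.
have detM' : c * b - d * a = 0 by rewrite -[RHS]oppr0 -detM; ring.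
move=> u; rewrite -(kernel_mx2 cd detM'); have [x [y ->]] := cv2P u.
by rewrite !mulmx2_cv2 !(rwP eqP) !cv2_eq0 andbC.
Qed.

Lemma common_eigenvector_of_kernel M X Y : M != 0 -> \det M = 0 ->
  (forall u : 'cV_2, M *m u = 0 -> M *m (X *m u) = 0) ->
  (forall u : 'cV_2, M *m u = 0 -> M *m (Y *m u) = 0) ->
  has_common_eigenvector X Y.
Proof.
move=> M0 detM kerX kerY; have [v v0 ker] := kernel_line M0 detM.
have Mv : M *m v = 0 by apply/ker; exists 1; rewrite scale1r.
exists v; split => //; split.
  by have [a Xv] := (ker _).1 (kerX _ Mv); exists a.
by have [b Yv] := (ker _).1 (kerY _ Mv); exists b.
Qed.

Lemma kernel_stable_comm M X (u : 'cV[F]_2) : M *m X = X *m M -> M *m u = 0 -> M *m (X *m u) = 0.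
Proof. by move=> MX Mu; rewrite mulmxA MX -mulmxA Mu mulmx0. Qed.

Lemma commutator_mulr A B :
  (A * B - B * A) *m A = \tr A *: (A * B - B * A) - A *m (A * B - B * A).
Proof.
rewrite mulmxE.
have [a1 [a2 [a3 [a4 ->]]]] := mx2P A; have [b1 [b2 [b3 [b4 ->]]]] := mx2P B.
rewrite !(mulmx2, oppmx2, addmx2) mxtrace_mx2 !(scalemx2, oppmx2, addmx2).
by congr mx2; ring.
Qed.

Lemma commutator_kernel_stable A B (u : 'cV[F]_2) :
  (A * B - B * A) *m u = 0 -> (A * B - B * A) *m (A *m u) = 0.
Proof.
by move=> Nu; rewrite mulmxA commutator_mulr mulmxBl -scalemxAl -mulmxA Nu scaler0 mulmx0 subr0.
Qed.

End CommonEigenvectors.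

Section ClosedFieldEigenvectors.
Variable F : closedFieldType.

Lemma exists_eigenvector n (M : 'M[F]_n.+1) :
  exists a, exists2 v : 'cV[F]_n.+1, v != 0 & M *m v = a *: v.
Proof.
have [a char_a] : exists a, root (char_poly M^T) a by apply/closed_rootP; rewrite size_char_poly.
have /eigenvalueP [v vM v0] : eigenvalue M^T a by rewrite eigenvalue_root_char.
exists a, v^T; first by rewrite trmx_eq0.
by rewrite -[M]trmxK -trmx_mul vM linearZ.
Qed.

Lemma common_eigenvectorP (A B : 'M[F]_2) :
  has_common_eigenvector A B <-> \det (A * B - B * A) = 0.
Proof.
split=> [[v [v0 [[a Av] [b Bv]]]] | detN].
  apply: (det_eq0_of_kernel v0).
  by rewrite mulmxBl -!mulmxA Bv Av -!scalemxAr Av Bv !scalerA mulrC subrr.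
have [comm | N0] := eqVneq (A * B - B * A) 0; last first.
  apply: (common_eigenvector_of_kernel N0 detN) => u Nu; first exact: commutator_kernel_stable.
  have NBA : A * B - B * A = - (B * A - A * B) by rewrite opprB.
  move: Nu; rewrite NBA !mulNmx => /eqP; rewrite oppr_eq0 => /eqP Nu.
  by rewrite commutator_kernel_stable ?oppr0.
have AB : A *m B = B *m A by apply/eqP; rewrite -subr_eq0; apply/eqP.
have [a [v v0 Av]] := exists_eigenvector A.
have [/eqP | A'0] := eqVneq (A - a%:M) 0.
  rewrite subr_eq0 => /eqP ->; have [b [u u0 Bu]] := exists_eigenvector B.
  by exists u; split => //; split; [exists a; rewrite mul_scalar_mx | exists b].
have detA' : \det (A - a%:M) = 0.
  by apply: (det_eq0_of_kernel v0); rewrite mulmxBl Av mul_scalar_mx subrr.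
by apply: (common_eigenvector_of_kernel A'0 detA') => u; apply: kernel_stable_comm;
  rewrite mulmxBl mulmxBr mul_scalar_mx mul_mx_scalar ?AB.
Qed.

End ClosedFieldEigenvectors.

HB.lock Definition curve_c4 (F : fieldType) : {poly F} := 'X ^+ 3 - 3 * 'X - 2.
HB.lock Definition curve_c2 (F : fieldType) : {poly F} := 4 + 4 * 'X - 'X ^+ 2 - 'X ^+ 3.

Section Curve.
Variable F : fieldType.
Implicit Types s t w : F.
Local Notation c4 := (curve_c4 F).
Local Notation c2 := (curve_c2 F).

Definition curve s t : F := c4.[s] * t ^+ 4 + c2.[s] * t ^+ 2 - 1.

Definition wcoord s t : F := t - (t * (s + 1))^-1.

Lemma horner_curve_c4 s : c4.[s] = s ^+ 3 - 3 * s - 2.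
Proof. by rewrite curve_c4.unlock !hornerE /=; ring. Qed.

Lemma horner_curve_c2 s : c2.[s] = 4 + 4 * s - s ^+ 2 - s ^+ 3.
Proof. by rewrite curve_c2.unlock !hornerE /=; ring. Qed.

Lemma curveE s t :
  curve s t = (t * (s + 1)) * (t * (s - 2) * ((s + 1) * t ^+ 2 - (s + 2))) - 1.
Proof. by rewrite /curve horner_curve_c4 horner_curve_c2; ring. Qed.

Lemma curve_unit s t : curve s t = 0 -> t != 0 /\ s + 1 != 0.
Proof.
rewrite curveE => /eqP; rewrite subr_eq0 => /eqP e; apply/andP; rewrite -negb_or -mulf_eq0.
by apply: contra_eq_neq e => ->; rewrite mul0r eq_sym oner_neq0.
Qed.

Lemma curve_inv_unit s t : curve s t = 0 ->
  (t * (s + 1))^-1 = t * (s - 2) * ((s + 1) * t ^+ 2 - (s + 2)).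
Proof.
move=> C; have [t0 s1] := curve_unit C.
by apply: (mulfI (mulf_neq0 t0 s1)); rewrite mulfV ?mulf_neq0 // -[RHS]subr0 -C curveE; ring.
Qed.

Lemma relator_coefs_on_curve s t : curve s t = 0 ->
  [/\ relI s t (wcoord s t) 1 1 = 0, relA s t (wcoord s t) 1 1 = 0,
      relB s t (wcoord s t) 1 1 = 0 & relAB s t (wcoord s t) 1 1 = 0].
Proof.
move=> C; have [t0 s1] := curve_unit C.
have eI : relI s t (wcoord s t) 1 1 = (- s * t ^+ 3 - t ^+ 3 + t) * curve s t / (t * (s + 1)) ^+ 3.
  by rewrite /relI /wcoord curveE; field; rewrite t0 s1.
have eB : relB s t (wcoord s t) 1 1 = t * curve s t / (t * (s + 1)) ^+ 2.
  by rewrite /relB /wcoord curveE; field; rewrite t0 s1.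
have eAB : relAB s t (wcoord s t) 1 1 = t * curve s t / (t * (s + 1)) ^+ 2.
  by rewrite /relAB /wcoord curveE; field; rewrite t0 s1.
split; rewrite ?eI ?eB ?eAB ?C ?mulr0 ?mul0r //.
by rewrite /relA /wcoord; field; rewrite t0 s1.
Qed.

Lemma curve_of_relator_coefs s t w : relA s t w 1 1 = 0 -> relAB s t w 1 1 = 0 ->
  curve s t = 0 /\ w = wcoord s t.
Proof.
move=> rA rAB; have unit_eq : (t * (s + 1)) * (w - t) = -1.
  by apply/eqP; rewrite -subr_eq0 -rA /relA; apply/eqP; ring.
have [t0 s1] : t != 0 /\ s + 1 != 0.
  apply/andP; rewrite -negb_or -mulf_eq0; apply: contra_eq_neq unit_eq => ->.
  by rewrite mul0r eq_sym oppr_eq0 oner_neq0.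
have w_eq : w = wcoord s t.
  rewrite /wcoord -[w](subrK t) -[w - t](mulKf (mulf_neq0 t0 s1)) unit_eq.
  by field; rewrite t0 s1.
split => //; apply/eqP; move/eqP: rAB.
have -> : relAB s t w 1 1 = t * curve s t / (t * (s + 1)) ^+ 2.
  by rewrite w_eq /relAB /wcoord curveE; field; rewrite t0 s1.
by rewrite !mulf_eq0 invr_eq0 expf_eq0 /= !mulf_eq0 (negbTE t0) (negbTE s1) !orbF.
Qed.

End Curve.

Lemma sqr_neq_XsubC_mul (F : fieldType) (a : F) (c g h : {poly F}) :
  ~~ root c a -> g ^+ 2 = ('X - a%:P) * c * h ^+ 2 -> h = 0.
Proof.
move=> ca E; apply/eqP/contraT => h0.
have c0 : c != 0 by apply: contraNneq ca => ->; rewrite root0.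
have Xa0 : 'X - a%:P != 0 by rewrite polyXsubC_eq0.
have g0 : g != 0.
  by apply: contra_eq_neq E => ->; rewrite expr0n /= eq_sym !mulf_neq0 ?expf_neq0.
have := congr1 (mup a) E; rewrite !expr2 !mupM ?mulf_neq0 // (mupNroot ca).
have -> : mup a ('X - a%:P) = 1%N by rewrite -['X - _]expr1 mup_XsubCX eqxx.
lia.
Qed.

Section CurveRing.
Variable R : numFieldType.
Implicit Types s t y z : R.
Local Notation c4 := (curve_c4 R).
Local Notation c2 := (curve_c2 R).

Lemma curve_c4E : c4 = ('X - 2%:P) * ('X + 1) ^+ 2.
Proof. by rewrite curve_c4.unlock; ring. Qed.

Lemma curve_discE :
  c2 ^+ 2 + 4 * c4 = ('X - 2%:P) * (('X + 1) ^+ 2 * (('X - 2%:P) * ('X + 2) ^+ 2 + 4)).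
Proof. by rewrite curve_c2.unlock curve_c4.unlock; ring. Qed.

(* The tower R[s][z]/(z^2 - c2 z - c4)[y]/(y^2 - z): a pair u stands for u.1 + u.2 z and a pair
   of pairs r for r.1 + r.2 y.  [e2norm] and [e4norm] are the norms down to R[s]. *)
Definition ext2 := ({poly R} * {poly R})%type.

Definition e2const (c : {poly R}) : ext2 := (c, 0).
Definition e2z : ext2 := (0, 1).
Definition e2add (u v : ext2) : ext2 := (u.1 + v.1, u.2 + v.2).
Definition e2sub (u v : ext2) : ext2 := (u.1 - v.1, u.2 - v.2).
Definition e2mul (u v : ext2) : ext2 :=
  (u.1 * v.1 + c4 * u.2 * v.2, u.1 * v.2 + u.2 * v.1 + c2 * u.2 * v.2).
Definition e2norm (u : ext2) : {poly R} := u.1 ^+ 2 + c2 * u.1 * u.2 - c4 * u.2 ^+ 2.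
Definition e2eval (u : ext2) s z : R := u.1.[s] + u.2.[s] * z.

Section Ext2Eval.
Variables (s z : R).

Lemma e2eval_const c : e2eval (e2const c) s z = c.[s].
Proof. by rewrite /e2eval /= horner0 mul0r addr0. Qed.

Lemma e2eval_z : e2eval e2z s z = z.
Proof. by rewrite /e2eval /= horner0 hornerC mul1r add0r. Qed.

Lemma e2eval_add u v : e2eval (e2add u v) s z = e2eval u s z + e2eval v s z.
Proof. by rewrite /e2eval /= !hornerD; ring. Qed.

Lemma e2eval_sub u v : e2eval (e2sub u v) s z = e2eval u s z - e2eval v s z.
Proof. by rewrite /e2eval /= !hornerD !hornerN; ring. Qed.

Hypothesis z_root : z ^+ 2 = c2.[s] * z + c4.[s].

Lemma e2eval_mul u v : e2eval (e2mul u v) s z = e2eval u s z * e2eval v s z.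
Proof.
have c4s : c4.[s] = z ^+ 2 - c2.[s] * z by rewrite z_root; ring.
by rewrite /e2eval /= !(hornerD, hornerM) c4s; ring.
Qed.

Lemma e2norm_root u : e2eval u s z = 0 -> (e2norm u).[s] = 0.
Proof.
have c4s : c4.[s] = z ^+ 2 - c2.[s] * z by rewrite z_root; ring.
move=> /eqP; rewrite addr_eq0 => /eqP u1.
by rewrite /e2norm !(hornerD, hornerN, hornerM, horner_exp) c4s u1; ring.
Qed.

End Ext2Eval.

Lemma e2normM u v : e2norm (e2mul u v) = e2norm u * e2norm v.
Proof. by rewrite /e2norm /e2mul /=; ring. Qed.

Lemma e2norm_eq0 u : e2norm u = 0 -> u = (0, 0).
Proof.
move=> N0; have E : (2 * u.1 + c2 * u.2) ^+ 2 = (c2 ^+ 2 + 4 * c4) * u.2 ^+ 2.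
  by apply/eqP; rewrite -subr_eq0; apply/eqP; rewrite -[RHS](mulr0 4) -N0 /e2norm; ring.
rewrite curve_discE in E; have /(sqr_neq_XsubC_mul)/(_ E) u2 : ~~ root
    (('X + 1) ^+ 2 * (('X - 2%:P) * ('X + 2) ^+ 2 + 4)) (2 : R).
  rewrite /root !(hornerD, hornerN, hornerM, horner_exp, hornerX, hornerC) subrr mul0r add0r.
  by rewrite (_ : _ * _ = 36%:R) ?pnatr_eq0 //; ring.
move: N0; rewrite /e2norm u2 expr0n /= !(mulr0, subr0, addr0) => /eqP.
rewrite sqrf_eq0 => /eqP u1.
by rewrite [u]surjective_pairing u1 u2.
Qed.

Lemma e2norm_z : e2norm e2z = - c4.
Proof. by rewrite /e2norm /=; ring. Qed.

Definition ext4 := (ext2 * ext2)%type.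

Definition e4const c : ext4 := (e2const c, e2const 0).
Definition e4add (r r' : ext4) : ext4 := (e2add r.1 r'.1, e2add r.2 r'.2).
Definition e4mul (r r' : ext4) : ext4 :=
  (e2add (e2mul r.1 r'.1) (e2mul e2z (e2mul r.2 r'.2)), e2add (e2mul r.1 r'.2) (e2mul r.2 r'.1)).
Definition e4norm (r : ext4) : {poly R} :=
  e2norm (e2sub (e2mul r.1 r.1) (e2mul e2z (e2mul r.2 r.2))).
Definition e4eval (r : ext4) s y : R := e2eval r.1 s (y ^+ 2) + e2eval r.2 s (y ^+ 2) * y.

Section Ext4Eval.
Variables (s y : R).

Lemma e4eval_const c : e4eval (e4const c) s y = c.[s].
Proof. by rewrite /e4eval !e2eval_const horner0 mul0r addr0. Qed.

Lemma e4eval_add r r' : e4eval (e4add r r') s y = e4eval r s y + e4eval r' s y.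
Proof. by rewrite /e4eval !e2eval_add; ring. Qed.

Hypothesis y_root : y ^+ 4 = c2.[s] * y ^+ 2 + c4.[s].
Let z_root : (y ^+ 2) ^+ 2 = c2.[s] * y ^+ 2 + c4.[s].
Proof. by rewrite -exprM. Qed.

Lemma e4eval_mul r r' : e4eval (e4mul r r') s y = e4eval r s y * e4eval r' s y.
Proof. by rewrite /e4eval !e2eval_add !(e2eval_mul z_root) e2eval_z; ring. Qed.

Lemma e4norm_root r : e4eval r s y = 0 -> (e4norm r).[s] = 0.
Proof.
move=> /eqP; rewrite addr_eq0 => /eqP r1; apply: (e2norm_root z_root).
by rewrite e2eval_sub !(e2eval_mul z_root) e2eval_z r1; ring.
Qed.

End Ext4Eval.

Lemma e4norm_eq0 r : e4norm r = 0 -> r = ((0, 0), (0, 0)).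
Proof.
move=> /e2norm_eq0 [/eqP r1 /eqP r2]; rewrite !subr_eq0 in r1 r2.
have sqr1 : e2mul r.1 r.1 = e2mul e2z (e2mul r.2 r.2).
  by rewrite [LHS]surjective_pairing [RHS]surjective_pairing; congr pair; apply/eqP.
have : e2norm r.1 ^+ 2 = ('X - 2%:P) * (- ('X + 1) ^+ 2) * e2norm r.2 ^+ 2.
  by rewrite expr2 -e2normM sqr1 !e2normM e2norm_z curve_c4E; ring.
have /sqr_neq_XsubC_mul/[apply]/e2norm_eq0 r2_0 : ~~ root (- ('X + 1) ^+ 2 : {poly R}) 2.
  rewrite /root !(hornerN, horner_exp, hornerD, hornerX, hornerC) oppr_eq0 expf_eq0 /=.
  by rewrite (_ : (2 : R) + 1 = 3%:R) ?pnatr_eq0 //; ring.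
have /e2norm_eq0 r1_0 : e2norm r.1 = 0.
  by apply/eqP; rewrite -sqrf_eq0 expr2 -e2normM sqr1 r2_0 /e2norm /=; apply/eqP; ring.
by rewrite [r]surjective_pairing r1_0 r2_0.
Qed.

End CurveRing.

Section RegularFunctions.
Variable R : numClosedFieldType.
Implicit Types s t : R.
Local Notation c4 := (curve_c4 R).
Local Notation c2 := (curve_c2 R).

Lemma curve_inv_root s t : curve s t = 0 -> t^-1 ^+ 4 = c2.[s] * t^-1 ^+ 2 + c4.[s].
Proof.
move=> C; have [t0 _] := curve_unit C.
have -> : c4.[s] = c4.[s] - curve s t / t ^+ 4 by rewrite C mul0r subr0.
by rewrite /curve; field.
Qed.

Lemma horner_curve_c4_neq0 s t : curve s t = 0 -> c4.[s] != 0.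
Proof.
move=> C; apply: contra_eq_neq C => c4s.
have : c2.[s] ^+ 2 = c4.[s] * ((s - 2) * (s + 2) ^+ 2).
  by rewrite horner_curve_c4 horner_curve_c2; ring.
move=> /eqP; rewrite c4s mul0r sqrf_eq0 => /eqP c2s.
by rewrite /curve c4s c2s !mul0r add0r sub0r oppr_eq0 oner_neq0.
Qed.

Lemma curve_point s : c4.[s] != 0 -> exists t, curve s t = 0.
Proof.
move=> c4s; set z := (c2.[s] + sqrtC (c2.[s] ^+ 2 + 4 * c4.[s])) / 2.
have z_root : z ^+ 2 = c2.[s] * z + c4.[s].
  apply/eqP; rewrite -subr_eq0; apply/eqP.
  have -> : z ^+ 2 - (c2.[s] * z + c4.[s]) =
      (sqrtC (c2.[s] ^+ 2 + 4 * c4.[s]) ^+ 2 - (c2.[s] ^+ 2 + 4 * c4.[s])) / 4 by rewrite /z; field.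
  by rewrite sqrtCK subrr mul0r.
have y0 : sqrtC z != 0.
  by rewrite sqrtC_eq0; apply: contra_neq c4s => z0; move: z_root; rewrite z0 expr0n mulr0 add0r.
exists (sqrtC z)^-1; rewrite /curve.
have -> : c4.[s] = z ^+ 2 - c2.[s] * z by rewrite z_root; ring.
by rewrite -{1 2}(sqrtCK z); field.
Qed.

(* Working with y = 1/t rather than t makes the relation y^4 = c2 y^2 + c4 monic. *)
Definition regular (phi : R -> R -> R) : Prop :=
  exists k (r : ext4 R), forall s t, curve s t = 0 -> c4.[s] ^+ k * phi s t = e4eval r s t^-1.

Lemma regular_ext phi psi :
  (forall s t, curve s t = 0 -> phi s t = psi s t) -> regular phi -> regular psi.
Proof. by move=> e [k [r reg]]; exists k, r => s t C; rewrite -e // reg. Qed.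

Lemma regular_const c : regular (fun _ _ => c).
Proof.
by exists 0%N, (e4const c%:P) => s t C; rewrite e4eval_const hornerC mul1r.
Qed.

Lemma regular_s : regular (fun s _ => s).
Proof.
by exists 0%N, (e4const 'X) => s t C; rewrite e4eval_const hornerX mul1r.
Qed.

Lemma regular_t : regular (fun _ t => t).
Proof.
exists 1%N, ((0, 0), (- c2, 1)) => s t C; have [t0 _] := curve_unit C.
rewrite /e4eval /e2eval /= hornerN !hornerC expr1.
have -> : c4.[s] = t^-1 ^+ 4 - c2.[s] * t^-1 ^+ 2 by rewrite (curve_inv_root C); ring.
by field.
Qed.

Lemma regularD phi psi : regular phi -> regular psi -> regular (fun s t => phi s t + psi s t).
Proof.
move=> [k1 [r1 reg1]] [k2 [r2 reg2]].
exists (k1 + k2)%N, (e4add (e4mul (e4const (c4 ^+ k2)) r1) (e4mul (e4const (c4 ^+ k1)) r2)).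
move=> s t C; have y_root := curve_inv_root C.
rewrite e4eval_add !(e4eval_mul y_root) !e4eval_const -reg1 // -reg2 //.
by rewrite !horner_exp exprD; ring.
Qed.

Lemma regularM phi psi : regular phi -> regular psi -> regular (fun s t => phi s t * psi s t).
Proof.
move=> [k1 [r1 reg1]] [k2 [r2 reg2]]; exists (k1 + k2)%N, (e4mul r1 r2) => s t C.
by rewrite (e4eval_mul (curve_inv_root C)) -reg1 // -reg2 // exprD; ring.
Qed.

Lemma regular_horner (p : {poly R}) f : regular f -> regular (fun s t => p.[f s t]).
Proof.
move=> reg_f; elim/poly_ind: p => [|p c IH].
  by apply: (regular_ext _ (regular_const 0)) => s t _; rewrite horner0.
apply: (regular_ext _ (regularD (regularM IH reg_f) (regular_const c))) => s t _.
by rewrite hornerMXaddC.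
Qed.

Lemma regular_horner2 (p : {poly {poly R}}) f g :
  regular f -> regular g -> regular (fun s t => (p.[(f s t)%:P]).[g s t]).
Proof.
move=> reg_f reg_g; elim/poly_ind: p => [|p c IH].
  by apply: (regular_ext _ (regular_const 0)) => s t _; rewrite !horner0.
apply: (regular_ext _ (regularD (regularM IH reg_f) (regular_horner c reg_g))) => s t _.
by rewrite hornerMXaddC hornerD hornerM hornerC.
Qed.

Lemma regular_ev3 (p : {poly {poly {poly R}}}) f g h : regular f -> regular g -> regular h ->
  regular (fun s t => ev3 p (f s t, g s t, h s t)).
Proof.
move=> reg_f reg_g reg_h; elim/poly_ind: p => [|p c IH].
  by apply: (regular_ext _ (regular_const 0)) => s t _; rewrite /ev3 !horner0.
apply: (regular_ext _ (regularD (regularM IH reg_f) (regular_horner2 c reg_g reg_h))) => s t _.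
by rewrite /ev3 /= hornerMXaddC !hornerD !hornerM !hornerC.
Qed.

Lemma regular_evst (p : {poly {poly R}}) : regular (evst p).
Proof. exact: regular_ext _ (regular_horner2 p regular_t regular_s). Qed.

Lemma regular_wcoord : regular (@wcoord R).
Proof.
pose p := varT R - varT R * (varS R - 2) * ((varS R + 1) * varT R ^+ 2 - (varS R + 2)).
apply: (regular_ext _ (regular_evst p)) => s t C.
by rewrite /evst /p /varS /varT /wcoord (curve_inv_unit C) !hornerE /=; ring.
Qed.

Lemma curve_c4_neq0 : c4 != 0.
Proof.
apply: contra_eq_neq (horner_curve_c4 (0 : R)) => ->.
rewrite horner0 (_ : _ - 2 = - 2 :> R); last by ring.
by rewrite eq_sym oppr_eq0 pnatr_eq0.
Qed.

Lemma regular_prime phi psi : regular phi -> regular psi ->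
  (forall s t, curve s t = 0 -> phi s t * psi s t = 0) ->
  (forall s t, curve s t = 0 -> phi s t = 0) \/ (forall s t, curve s t = 0 -> psi s t = 0).
Proof.
move=> [k1 [r1 reg1]] [k2 [r2 reg2]] prod0.
have vanish k r (f : R -> R -> R) :
    (forall s t, curve s t = 0 -> c4.[s] ^+ k * f s t = e4eval r s t^-1) ->
    r = ((0, 0), (0, 0)) -> forall s t, curve s t = 0 -> f s t = 0.
  move=> reg r0 s t C; apply: (mulfI (expf_neq0 k (horner_curve_c4_neq0 C))).
  by rewrite reg // r0 mulr0 /e4eval /e2eval /= !horner0; ring.
have [/e4norm_eq0 r1_0 | N1] := eqVneq (e4norm r1) 0; first by left; apply: vanish reg1 r1_0.
have [/e4norm_eq0 r2_0 | N2] := eqVneq (e4norm r2) 0; first by right; apply: vanish reg2 r2_0.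
exfalso; have /closed_nonrootP [s] : e4norm r1 * e4norm r2 * c4 != 0.
  by rewrite !mulf_neq0 // curve_c4_neq0.
rewrite /root !hornerM !mulf_eq0 !negb_or => /andP [/andP [N1s N2s] c4s].
have [t C] := curve_point c4s; have y_root := curve_inv_root C.
have /eqP := prod0 s t C; rewrite mulf_eq0 => /orP [/eqP f0 | /eqP g0].
  by move: N1s; rewrite (e4norm_root y_root) ?eqxx // -reg1 // f0 mulr0.
by move: N2s; rewrite (e4norm_root y_root) ?eqxx // -reg2 // g0 mulr0.
Qed.

End RegularFunctions.

(* Reducing mod t forces G1, H1, H2 into (t), then H2 into (t^2), against G1 H2 = t^2 (t^2 - 1). *)
Lemma no_linear_factor_coefs (F : fieldType) (G0 G1 H0 H1 H2 : {poly F}) :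
  G0 * H0 = -2 * 'X ^+ 4 + 4 * 'X ^+ 2 - 1 -> G0 * H1 + G1 * H0 = -3 * 'X ^+ 4 + 4 * 'X ^+ 2 ->
  G0 * H2 + G1 * H1 = - 'X ^+ 2 -> G1 * H2 = 'X ^+ 4 - 'X ^+ 2 -> False.
Proof.
have coef0M (p q : {poly F}) : (p * q)`_0 = p`_0 * q`_0.
  by rewrite coefM big_ord_recl big_ord0 addr0.
have coef1M (p q : {poly F}) : (p * q)`_1 = p`_0 * q`_1 + p`_1 * q`_0.
  by rewrite coefM !big_ord_recl big_ord0 addr0.
have coef2M (p q : {poly F}) : (p * q)`_2 = p`_0 * q`_2 + p`_1 * q`_1 + p`_2 * q`_0.
  by rewrite coefM !big_ord_recl big_ord0 addr0 addrA.
move=> e0 e1 e2 e3.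
move: (congr1 (coefp 0) e0) (congr1 (coefp 0) e1) (congr1 (coefp 0) e2) (congr1 (coefp 0) e3).
rewrite /= ?coefD ?coefN !coef0M !coefE /= !(mulr0, addr0, add0r, subr0, oppr0).
move=> f0 f1 f2 f3.
have [x0 y0] : G0`_0 != 0 /\ H0`_0 != 0.
  by apply/andP; rewrite -negb_or -mulf_eq0 f0 oppr_eq0 oner_neq0.
have x1 : G1`_0 = 0.
  have : G1`_0 ^+ 3 * H0`_0 = 0.
    transitivity (G1`_0 ^+ 2 * (G0`_0 * H1`_0 + G1`_0 * H0`_0)
      - G0`_0 * G1`_0 * (G0`_0 * H2`_0 + G1`_0 * H1`_0) + G0`_0 ^+ 2 * (G1`_0 * H2`_0)).
      by ring.
    by rewrite f1 f2 f3; ring.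
  by move/eqP; rewrite mulf_eq0 (negbTE y0) orbF expf_eq0 /= => /eqP.
have [y1 y2] : H1`_0 = 0 /\ H2`_0 = 0.
  move: f1 f2; rewrite x1 !mul0r !addr0 => /eqP; rewrite mulf_eq0 (negbTE x0) /= => /eqP ->.
  by move/eqP; rewrite mulf_eq0 (negbTE x0) /= => /eqP.
have h21 : H2`_1 = 0.
  move: (congr1 (coefp 1) e2); rewrite /= coefD !coef1M coefN !coefE /= x1 y1 y2.
  by rewrite !(mulr0, mul0r, addr0, oppr0) => /eqP; rewrite mulf_eq0 (negbTE x0) /= => /eqP.
move: (congr1 (coefp 2) e3); rewrite /= coef2M !coefE /= x1 h21 y2 !(mulr0, mul0r, addr0, add0r).
by move/eqP; rewrite eq_sym oppr_eq0 oner_eq0.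
Qed.

Section PcurveIrreducible.
Variable R : numClosedFieldType.
Local Notation Q := (swapXY (Pcurve R)).

Lemma evst_Pcurve (s t : R) : evst (Pcurve R) s t = curve s t.
Proof.
rewrite /evst /Pcurve /varS /varT /curve horner_curve_c4 horner_curve_c2.
by rewrite !hornerE /=; ring.
Qed.

Lemma swap_PcurveE : Q = Poly [:: -2 * 'X ^+ 4 + 4 * 'X ^+ 2 - 1; -3 * 'X ^+ 4 + 4 * 'X ^+ 2;
                                  - 'X ^+ 2; 'X ^+ 4 - 'X ^+ 2].
Proof.
rewrite /Pcurve /varS /varT !(rmorphD, rmorphN, rmorphM, rmorphXn, rmorph_nat, rmorph1) /=.
rewrite swapXY_polyC swapXY_X /= map_polyX !cons_poly_def.
by rewrite !(rmorphD, rmorphN, rmorphM, rmorphXn, rmorph_nat, rmorph0); ring.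
Qed.

Lemma coef_swap_Pcurve k : Q`_k = [:: -2 * 'X ^+ 4 + 4 * 'X ^+ 2 - 1; -3 * 'X ^+ 4 + 4 * 'X ^+ 2;
                                       - 'X ^+ 2; 'X ^+ 4 - 'X ^+ 2]`_k.
Proof. by rewrite swap_PcurveE coef_Poly. Qed.

Lemma size_swap_Pcurve : size Q = 4.
Proof.
rewrite swap_PcurveE (@PolyK _ 0) //=.
by apply/eqP => /(congr1 (coefp 4)) /eqP; rewrite /= !coefE /= subr0 oner_eq0.
Qed.

Lemma swap_Pcurve_no_linear_factor (G H : {poly {poly R}}) :
  size G = 2 -> size H = 3 -> Q = G * H -> False.
Proof.
move=> sG sH QGH; have G_ k : (2 <= k)%N -> G`_k = 0 by move=> k2; rewrite nth_default ?sG.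
have H_ k : (3 <= k)%N -> H`_k = 0 by move=> k3; rewrite nth_default ?sH.
have coefQ k : Q`_k = \sum_(i < k.+1) G`_i * H`_(k - i) by rewrite QGH coefM.
apply: (@no_linear_factor_coefs _ G`_0 G`_1 H`_0 H`_1 H`_2).
- by move: (coefQ 0%N); rewrite coef_swap_Pcurve big_ord_recl big_ord0 addr0 => <-.
- by move: (coefQ 1%N); rewrite coef_swap_Pcurve !big_ord_recl big_ord0 addr0 => <-.
- move: (coefQ 2%N); rewrite coef_swap_Pcurve !big_ord_recl big_ord0 /bump /= (G_ 2%N) //.
  by rewrite mul0r !addr0 => <-.
- move: (coefQ 3%N); rewrite coef_swap_Pcurve !big_ord_recl big_ord0 /bump /=.
  by rewrite (G_ 2%N) // (G_ 3%N) // (H_ 3%N) // !(mul0r, mulr0, addr0, add0r) => <-.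
Qed.

Lemma swap_Pcurve_const_factor (G H : {poly {poly R}}) :
  size G = 1 -> Q = G * H -> biconst (swapXY G).
Proof.
move=> sG QGH; have GC : G = (G`_0)%:P by apply: size1_polyC; rewrite sG.
have coefQ k : Q`_k = G`_0 * H`_k by rewrite QGH {1}GC coefCM.
have : G`_0 \is a GRing.unit.
  apply/unitrPr; exists ((2 * 'X ^+ 2 - 1) * H`_0 + (4 * 'X ^+ 2 - 6) * H`_3).
  rewrite mulrDr !mulrA ![G`_0 * _]mulrC -!mulrA -!coefQ !coef_swap_Pcurve /=; ring.
rewrite poly_unitE => /andP [/eqP sG0 _].
have G0C : G`_0 = (G`_0`_0)%:P by apply: size1_polyC; rewrite sG0.
by exists G`_0`_0; rewrite [in LHS]GC swapXY_polyC [in LHS]G0C map_polyC.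
Qed.

Lemma Pcurve_irreducible : irreducible2 (Pcurve R).
Proof.
split.
  move=> [c Pc]; have : curve (0 : R) 1 - curve 0 0 = 2.
    by rewrite /curve horner_curve_c4 horner_curve_c2; ring.
  rewrite -!evst_Pcurve Pc /evst !hornerC subrr => /eqP.
  by rewrite eq_sym pnatr_eq0.
move=> g h gh; have QGH : Q = swapXY g * swapXY h by rewrite gh rmorphM.
have [g0 h0] : swapXY g != 0 /\ swapXY h != 0.
  by apply/andP; rewrite -negb_or -mulf_eq0 -QGH -size_poly_eq0 size_swap_Pcurve.
have sGH : (size (swapXY g) + size (swapXY h))%N = 5.
  have := size_mul g0 h0; rewrite -QGH size_swap_Pcurve => e.
  by rewrite -[LHS]prednK ?addn_gt0 ?size_poly_gt0 ?g0 // -e.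
have QHG : Q = swapXY h * swapXY g by rewrite mulrC.
move: g0 h0; rewrite -!size_poly_eq0 => g0 h0.
case sG: (size (swapXY g)) g0 sGH => [|[|[|[|[|n]]]]] // _ sGH.
- by left; rewrite -[g]swapXYK; apply: swap_Pcurve_const_factor sG QGH.
- have sH : size (swapXY h) = 3 by lia.
  by exfalso; apply: (swap_Pcurve_no_linear_factor sG sH QGH).
- have sH : size (swapXY h) = 2 by lia.
  by exfalso; apply: (swap_Pcurve_no_linear_factor sH sG QHG).
- have sH : size (swapXY h) = 1 by lia.
  by right; rewrite -[h]swapXYK; apply: (swap_Pcurve_const_factor sH QHG).
- by move: h0; lia.
Qed.

End PcurveIrreducible.

Lemma sl2_common_eigenvectorP (F : closedFieldType) (A B : 'M[F]_2) :
  \det A = 1 -> \det B = 1 ->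
  has_common_eigenvector A B <-> kappa (\tr A) (\tr B) (\tr (A * B)) 1 1 = 2.
Proof.
move=> detA detB; rewrite common_eigenvectorP det_commutator detA detB !mulr1.
by split => [/eqP | ->]; [rewrite subr_eq0 eq_sym => /eqP | rewrite subrr].
Qed.

Section CharacterVariety.
Variable R : numClosedFieldType.
Implicit Types (x : R * R * R) (s t : R).
Local Notation S := ('X : {poly {poly {poly R}}}).
Local Notation T := ('X%:P : {poly {poly {poly R}}}).
Local Notation W := ('X%:P%:P : {poly {poly {poly R}}}).

Definition main_component x : Prop := curve x.1.1 x.1.2 = 0 /\ x.2 = wcoord x.1.1 x.1.2.
Definition reducible_locus x : Prop := kappa x.1.1 x.1.2 x.2 1 1 = 2.

Lemma zclosed_main_component : zclosed main_component.
Proof.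
pose curve3 := (S ^+ 3 - 3 * S - 2) * T ^+ 4 + (4 + 4 * S - S ^+ 2 - S ^+ 3) * T ^+ 2 - 1.
pose wcoord3 := W * (T * (S + 1)) - T ^+ 2 * (S + 1) + 1.
have ev_curve3 x : ev3 curve3 x = curve x.1.1 x.1.2.
  by rewrite /ev3 /curve3 /curve horner_curve_c4 horner_curve_c2 !hornerE /=; ring.
have ev_wcoord3 x : ev3 wcoord3 x = x.2 * (x.1.2 * (x.1.1 + 1)) - x.1.2 ^+ 2 * (x.1.1 + 1) + 1.
  by rewrite /ev3 /wcoord3 !hornerE /=; ring.
exists (fun p => p = curve3 \/ p = wcoord3) => -[[s t] w]; rewrite /main_component /=; split.
  move=> [C ->] p [] ->; rewrite ?ev_curve3 ?ev_wcoord3 //=.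
  by have [t0 s1] := curve_unit C; rewrite /wcoord; field; rewrite t0 s1.
move=> ev0; have C : curve s t = 0 by rewrite -(ev_curve3 (s, t, w)) ev0 //; left.
split => //; have [t0 s1] := curve_unit C.
have := ev0 _ (or_intror erefl); rewrite ev_wcoord3 /= /wcoord => w_eq.
have -> : w = (w * (t * (s + 1)) - t ^+ 2 * (s + 1) + 1 + t ^+ 2 * (s + 1) - 1) / (t * (s + 1)).
  by field; rewrite t0 s1.
by rewrite w_eq; field; rewrite t0 s1.
Qed.

Lemma zclosed_reducible_locus : zclosed reducible_locus.
Proof.
pose kappa3 := S ^+ 2 + T ^+ 2 + W ^+ 2 - S * T * W - 4.
have ev_kappa3 x : ev3 kappa3 x = kappa x.1.1 x.1.2 x.2 1 1 - 2.
  by rewrite /ev3 /kappa3 /kappa !hornerE /=; ring.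
exists (eq^~ kappa3) => x; rewrite /reducible_locus; split => [k2 p -> | ev0].
  by rewrite ev_kappa3 k2 subrr.
by apply/eqP; rewrite -subr_eq0 -ev_kappa3 ev0.
Qed.

Lemma charvar_split x : charvar x -> main_component x \/ reducible_locus x.
Proof.
move=> [A [B [[detA [detB rel]] <-]]]; rewrite /main_component /reducible_locus /character /=.
have [k2 | k2] := eqVneq (kappa (\tr A) (\tr B) (\tr (A * B)) 1 1) 2; [by right | left].
have := relator_decomposition detA detB; rewrite /= rel subrr.
move=> /esym/(sl2_basis_free detA detB k2) [_ rA _ rAB].
exact: curve_of_relator_coefs rA rAB.
Qed.

Lemma exists_mul_sub_eq1 s : exists a, a * (s - a) = 1.
Proof.
exists ((s + sqrtC (s ^+ 2 - 4)) / 2).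
have -> : (s + sqrtC (s ^+ 2 - 4)) / 2 * (s - (s + sqrtC (s ^+ 2 - 4)) / 2) =
    (s ^+ 2 - sqrtC (s ^+ 2 - 4) ^+ 2) / 4 by field.
by rewrite sqrtCK; field.
Qed.

Lemma main_component_charvar x :
  main_component x -> exists A B : 'M[R]_2, is_rep A B /\ character A B = x.
Proof.
case: x => [[s t] _] [/= C ->]; set w := wcoord s t.
have [a a_eq] := exists_mul_sub_eq1 s; have [b b_eq] := exists_mul_sub_eq1 t.
pose A := mx2 a 1 0 (s - a); pose B := mx2 b 0 (w - a * b - (s - a) * (t - b)) (t - b).
have detA : \det A = 1 by rewrite det_mx2 -a_eq; ring.
have detB : \det B = 1 by rewrite det_mx2 -b_eq; ring.
have [trA trB trAB] : [/\ \tr A = s, \tr B = t & \tr (A * B) = w].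
  by rewrite mulmx2 !mxtrace_mx2; split; ring.
exists A, B; split; last by rewrite /character trA trB trAB.
split => //; split => //; apply/eqP; rewrite -subr_eq0.
have := relator_decomposition detA detB; rewrite /= trA trB trAB => ->.
have [-> -> -> ->] := relator_coefs_on_curve C.
by rewrite !scale0r !addr0 scalar_mx2 -mx2_0.
Qed.

Lemma base_point : exists t,
  main_component (0, t, wcoord 0 t) /\ ~ reducible_locus (0, t, wcoord 0 t).
Proof.
have [t C] : exists t, curve (0 : R) t = 0.
  apply: curve_point; rewrite horner_curve_c4 (_ : _ - 2 = - 2 :> R); last by ring.
  by rewrite oppr_eq0 pnatr_eq0.
exists t; split => //; rewrite /reducible_locus /= => k2; have [t0 _] := curve_unit C.
have : kappa 0 t (wcoord 0 t) 1 1 - 2 = - 2 - curve 0 t / t ^+ 2.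
  by rewrite /kappa /wcoord /curve horner_curve_c4 horner_curve_c2; field.
by rewrite k2 C subrr mul0r subr0 => /eqP; rewrite eq_sym oppr_eq0 pnatr_eq0.
Qed.

Lemma main_component_irreducible : irr_closed main_component.
Proof.
split; first exact: zclosed_main_component.
split; first by have [t [X0t _]] := base_point; exists (0, t, wcoord 0 t).
move=> Z1 Z2 [F1 Z1E] [F2 Z2E] cover; apply: NNPP => /not_or_and [nZ1 nZ2].
have witness (Z : R * R * R -> Prop) F : (forall x, Z x <-> forall p, F p -> ev3 p x = 0) ->
    ~ (forall x, main_component x -> Z x) ->
    exists2 p, F p & ~ (forall s t, curve s t = 0 -> ev3 p (s, t, wcoord s t) = 0).
  move=> ZE nZ; apply: NNPP => none; apply: nZ => -[[s t] w] [/= C ->]; apply/ZE => p Fp.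
  by apply: NNPP => ev_ne; apply: none; exists p => // all0; apply: ev_ne (all0 s t C).
have [p1 F1p1 n1] := witness _ _ Z1E nZ1; have [p2 F2p2 n2] := witness _ _ Z2E nZ2.
have reg p := regular_ev3 p (regular_s R) (regular_t R) (regular_wcoord R).
case: (regular_prime (reg p1) (reg p2)) => // s t C.
have [/Z1E Z1x | /Z2E Z2x] := cover (s, t, wcoord s t) (conj C erefl).
  by rewrite (Z1x p1) // mul0r.
by rewrite (Z2x p2) // mulr0.
Qed.

Lemma main_component_sub_charvar x : main_component x -> charvar x.
Proof. by move=> /main_component_charvar [A [B [rep ch]]]; exists A, B. Qed.

Lemma main_component_is_component : component main_component.
Proof.
split; first exact: main_component_irreducible.
split=> [|Z [_ [_ irrZ]] Zchar X0Z x Zx]; first exact: main_component_sub_charvar.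
have := irrZ _ _ zclosed_main_component zclosed_reducible_locus.
case=> [y /Zchar/charvar_split // | /(_ x Zx) // | ZK]; have [t [X0t nK]] := base_point.
by case: nK; apply: ZK; apply: X0Z.
Qed.

End CharacterVariety.

Theorem lemma1 (R : numClosedFieldType) :
  exists X0 : R * R * R -> Prop,
    [/\ component X0,
        (exists A B : 'M[R]_2, is_rep A B /\ irreducible_rep A B /\ X0 (character A B)),
        (forall Y, component Y ->
           (exists A B : 'M[R]_2, is_rep A B /\ irreducible_rep A B /\ Y (character A B)) ->
           forall x, Y x <-> X0 x),
        (* s, t are complete coordinates: X0 maps bijectively onto the curve Pcurve = 0,
           with the third coordinate w a regular function of (s, t) *)
        ((forall x, X0 x ->
           evst (Pcurve R) x.1.1 x.1.2 = 0 /\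
           x.1.2 * (x.1.1 + 1) != 0 /\
           x.2 = x.1.2 - (x.1.2 * (x.1.1 + 1))^-1) /\
         (forall s t : R, evst (Pcurve R) s t = 0 -> exists w, X0 (s, t, w))) &
        (Pcurve R = Pcurve' R /\
            irreducible2 (Pcurve R) /\
            (forall A B : 'M[R]_2, is_rep A B -> X0 (character A B) ->
               \tr (A * B) = \tr ((A * B)^-1) /\
               \tr (A * B) = \tr B - (\tr B * (\tr A + 1))^-1))].
Proof.
exists (@main_component R); split.
- exact: main_component_is_component.
- have [t [X0t nK]] := base_point R; have [A [B [rep chAB]]] := main_component_charvar X0t.
  exists A, B; split=> //; split; last by rewrite chAB.
  have [detA [detB _]] := rep; move=> /(sl2_common_eigenvectorP detA detB) k2.
  by apply: nK; rewrite -chAB.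
- move=> Y [[_ [_ irrY]] [Ychar maxY]] [A [B [[detA [detB _]] [irrAB YAB]]]].
  have YX0 x : Y x -> main_component x.
    have := irrY _ _ (zclosed_main_component R) (zclosed_reducible_locus R).
    case=> [y /Ychar/charvar_split // | YX0 | YK]; first exact: YX0.
    by case: irrAB; apply/(sl2_common_eigenvectorP detA detB); apply: YK YAB.
  have X0Y := maxY _ (main_component_irreducible R) (@main_component_sub_charvar R) YX0.
  by move=> x; split; [apply: YX0 | apply: X0Y].
- split=> [[[s t] w] [/= C ->] | s t]; rewrite evst_Pcurve.
    by have [t0 s1] := curve_unit C; rewrite mulf_neq0.
  by move=> C; exists (wcoord s t).
- split; first by rewrite /Pcurve /Pcurve'; ring.
  split; first exact: Pcurve_irreducible.
  move=> A B [detA [detB _]] [_ w_eq]; split; last exact: w_eq.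
  by rewrite mxtrace_inv_sl2 // -mulmxE det_mulmx detA detB mulr1.
Qed.
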